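(* Let $G$ be a finite group and $H \le G$ a subgroup with $H \neq \{e\}$. Let $X$ be the set of right cosets of $H$ in $G$, on which $G$ acts by right multiplication; for $g \in G$ let $\mathrm{fix}_X(g)$ be the number of points of $X$ fixed by $g$, and let $r_X(G)$ be the number of orbits of $H$ on $X$. Then (i) $D_H > \frac{1}{|G|}\sum_{h \in H,\, h \neq e} \mathrm{fix}_X(h)$; (ii) $D_H > r_X(G)/|X| - 1/|H|$.
   Context: For a finite group $G$, let $\mathrm{Irr}(G)$ be its set of complex irreducible characters and $d_\chi=\chi(e)$. For $H \le G$ let $D_H = \frac{1}{|G|}\sum_{\chi \in \mathrm{Irr}(G)} d_\chi \big|\sum_{h \in H, h \neq e}\chi(h)\big|$, the $L_1$ distance between the distributions $P_H(\chi)=\frac{d_\chi}{|G|}\sum_{h\in H}\chi(h)$ and $P_{\{e\}}$ on $\mathrm{Irr}(G)$. *)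

From mathcomp Require Import all_boot all_order all_algebra all_fingroup all_solvable all_field all_character.
Set Implicit Arguments. Unset Strict Implicit. Unset Printing Implicit Defensive.
Import GRing.Theory Num.Theory.
Local Open Scope ring_scope.

Definition D_H (gT : finGroupType) (G H : {group gT}) : algC :=
  (#|G|%:R)^-1 * \sum_(i : Iirr G) 'chi[G]_i 1%g * `|\sum_(h in (H^#)%g) 'chi[G]_i h|.

Definition fixX (gT : finGroupType) (G H : {group gT}) (g : gT) : nat :=
  #|[set X in rcosets H G | (X :* g)%g == X]|.

Definition rX (gT : finGroupType) (G H : {group gT}) : nat :=
  #|[set orbit 'Rs H X | X in rcosets H G]|.

From mathcomp Require Import all_boot all_order all_algebra all_fingroup all_solvable all_field all_character.
From mathcomp Require Import ring.
Import Order.TTheory GRing.Theory Num.Theory.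
Local Open Scope ring_scope.

(* Write a_i = chi_i(1), m_i = ['Res[H] chi_i, 1]_H and
   d_i = \sum_(h in H^#) chi_i(h) = |H| m_i - a_i.  The permutation character
   'Ind[G, H] 1 = \sum_i m_i chi_i counts fixed cosets, so |G| times the left
   side of (i) is \sum_i m_i d_i, while |G| D_H = \sum_i a_i |d_i|.  The regular
   character vanishes off 1, so \sum_i a_i d_i = 0 and hence
   \sum_i m_i d_i = |H|^-1 \sum_i d_i^2.  As 0 <= m_i <= a_i, each
   d_i^2 <= |H| a_i |d_i|, strictly for the trivial character since H <> 1.
   By Burnside's lemma the left side of (ii) equals that of (i). *)

Lemma norm_natmulB_le (R : numDomainType) (k : nat) (a m : R) :
  (0 < k)%N -> 0 <= m -> m <= a -> `|k%:R * m - a| <= k%:R * a.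
Proof.
move=> k_gt0 m_ge0 le_ma; have a_ge0 := le_trans m_ge0 le_ma.
have k_ge1 : 1 <= k%:R :> R by rewrite ler1n.
have km_ge0 : 0 <= k%:R * m by rewrite mulr_ge0 ?ler0n.
rewrite real_ler_norml ?rpredB ?ger0_real //; apply/andP; split.
- apply: le_trans (_ : - a <= _); first by rewrite lerN2 ler_peMl.
  by rewrite ler_wpDl.
- apply: le_trans (_ : k%:R * m <= _); first by rewrite lerBlDr lerDl.
  by rewrite ler_wpM2l ?ler0n.
Qed.

Lemma sum_mul_lt_sum_mul_norm (R : numFieldType) (I : finType) (i0 : I) (k : nat)
    (a m : I -> R) :
  (1 < k)%N -> (forall i, 0 <= m i) -> (forall i, m i <= a i) ->
  m i0 = 1 -> a i0 = 1 -> \sum_i a i * (k%:R * m i - a i) = 0 ->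
  \sum_i m i * (k%:R * m i - a i) < \sum_i a i * `|k%:R * m i - a i|.
Proof.
move=> k_gt1 m_ge0 le_ma m_i0 a_i0 orth.
have k_gt0 : (0 < k)%N by apply: ltnW.
have kR_gt0 : 0 < k%:R :> R by rewrite ltr0n.
pose d i := k%:R * m i - a i.
have -> : \sum_i m i * d i = k%:R^-1 * \sum_i d i ^+ 2.
  (* [k m_i d_i = d_i^2 + a_i d_i], and the [a_i d_i] sum to [0] *)
  apply: (@mulfI _ k%:R); first by rewrite gt_eqF.
  rewrite mulrA mulfV ?gt_eqF // mul1r mulr_sumr.
  rewrite -[RHS]addr0 -[X in _ + X]orth -big_split; apply: eq_bigr => i _ /=.
  by rewrite /d; ring.
rewrite -(ltr_pM2l kR_gt0) mulVKf ?gt_eqF // mulr_sumr.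
rewrite (bigD1 i0) //= [ltRHS](bigD1 i0) //=; apply: ltr_leD.
- rewrite /d m_i0 a_i0 mulr1 mul1r.
  case: k k_gt1 {k_gt0 kR_gt0 orth d} => // k k_gt0.
  by rewrite -natr1 addrK normr_nat expr2 ltr_pM2r ?ltr0n // ltrDl.
- apply: ler_sum => i _.
  have d_real : d i \is Num.real.
    by rewrite rpredB ?rpredM ?ger0_real ?ler0n // (le_trans (m_ge0 i)).
  rewrite -real_normK // expr2 mulrA ler_wpM2r //.
  exact: norm_natmulB_le.
Qed.

Lemma rcoset_fixedE (gT : finGroupType) (H : {group gT}) (x g : gT) :
  (H :* x :* g == H :* x)%g = (x * g * x^-1 \in H)%g.
Proof.
rewrite -rcosetM -mem_rcoset; apply/eqP/idP => [<-|/rcoset_eqP //].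
exact: rcoset_refl.
Qed.

Lemma card_Fix_rcosets (gT : finGroupType) (G H : {group gT}) (g : gT) :
  #|'Fix_(rcosets H G | 'Rs)[g]%g%act| = fixX G H g.
Proof. by apply: eq_card => X; rewrite !inE sub1set inE /= rcosetE. Qed.

Lemma fixX1 (gT : finGroupType) (G H : {group gT}) : fixX G H 1 = #|G : H|%g.
Proof. by apply: eq_card => X; rewrite inE rcoset1 eqxx andbT. Qed.

Lemma sum_irr1_mul_sum_irr (gT : finGroupType) (G : {group gT}) (A : {set gT}) :
  (1 \notin A)%g -> \sum_(i : Iirr G) 'chi_i 1%g * \sum_(g in A) 'chi_i g = 0.
Proof.
move=> notA1; under eq_bigr do rewrite mulr_sumr.
rewrite exchange_big big1 //= => g Ag.
have ntg : g != 1%g by apply: contraNneq notA1 => <-.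
transitivity (cfReg G g); last by rewrite cfRegE (negPf ntg).
by rewrite cfReg_sum sum_cfunE; apply: eq_bigr => i _; rewrite cfunE.
Qed.

Section PermutationCharacter.

Variables (gT : finGroupType) (G H : {group gT}).
Hypothesis sHG : (H \subset G)%g.

Lemma sum_conj_in_subgroup (g : gT) :
  (\sum_(y in G) ((g ^ y)%g \in H))%N = (#|H| * fixX G H g)%N.
Proof.
rewrite (reindex_inj invg_inj) /= (eq_bigl (mem G)) => [|y]; last first.
  by rewrite /= groupV.
rewrite (set_partition_big _ (rcosets_partition sHG)) /fixX -sum1_card big_distrr.
rewrite [LHS]big_mkcond [RHS]big_mkcond; apply: eq_bigr => X _ /=.
rewrite inE; case: ifP => // /rcosetsP[x Gx ->]; rewrite rcoset_fixedE.
rewrite (eq_bigr (fun _ => (x * g * x^-1 \in H)%g : nat)) => [|_ /rcosetP[h Hh ->]].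
  by rewrite sum_nat_const card_rcoset; case: (x * g * x^-1 \in H)%g; rewrite ?muln0.
by rewrite invMg conjgM groupJr ?groupV // conjgE invgK mulgA.
Qed.

Lemma cfInd1E (g : gT) : 'Ind[G, H] 1 g = (fixX G H g)%:R.
Proof.
rewrite cfIndE //; under eq_bigr do rewrite cfun1E.
by rewrite -natr_sum sum_conj_in_subgroup natrM mulKf ?neq0CG.
Qed.

Lemma sum_cfun_subgroup (phi : 'CF(G)) :
  \sum_(x in H) phi x = #|H|%:R * '['Res[H] phi, 1]_H.
Proof.
rewrite cfdotE mulVKf ?neq0CG //.
by apply: eq_bigr => x Hx; rewrite cfResE // cfun1E Hx conjC1 mulr1.
Qed.

Lemma sum_irr_setD1 (i : Iirr G) :
  \sum_(h in H^#%g) 'chi_i h = #|H|%:R * '['Res[H] 'chi_i, 1]_H - 'chi_i 1%g.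
Proof.
by rewrite -sum_cfun_subgroup [in RHS](big_setD1 1%g) //= addrAC subrr add0r.
Qed.

Lemma cfdot_Res1_nat (i : Iirr G) : '['Res[H] 'chi_i, 1]_H \in Num.nat.
Proof. by rewrite Cnat_cfdot_char ?cfRes_char ?irr_char ?cfun1_char. Qed.

Lemma cfdot_Res1_le_irr1 (i : Iirr G) : '['Res[H] 'chi_i, 1]_H <= 'chi_i 1%g.
Proof.
rewrite -(ler_pM2l (gt0CG H)) -sum_cfun_subgroup -[leLHS]ger0_norm; last first.
  by rewrite sum_cfun_subgroup mulr_ge0 ?ler0n ?natr_ge0 ?cfdot_Res1_nat.
apply: le_trans (ler_norm_sum _ _ _) _; rewrite mulr_natl -sumr_const.
by apply: ler_sum => x _; apply/char1_ge_norm/irr_char.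
Qed.

Lemma sum_fixX_setD1 :
  \sum_(h in H^#%g) (fixX G H h)%:R =
    \sum_i '['Res[H] 'chi_i, 1]_H * \sum_(h in H^#%g) 'chi[G]_i h.
Proof.
under eq_bigr do rewrite -cfInd1E (cfun_sum_cfdot ('Ind[G, H] 1)) sum_cfunE.
rewrite exchange_big /=; apply: eq_bigr => i _; rewrite mulr_sumr.
apply: eq_bigr => h _; rewrite cfunE -Frobenius_reciprocity cfdotC.
by rewrite conj_natr ?cfdot_Res1_nat.
Qed.

Lemma rX_mul_order :
  (rX G H * #|H|)%N = (#|G : H|%g + \sum_(h in H^#%g) fixX G H h)%N.
Proof.
rewrite -(Frobenius_Cauchy (subset_trans sHG (actsRs_rcosets H G))).
rewrite (big_setD1 1%g) //= card_Fix_rcosets fixX1.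
by under eq_bigr do rewrite card_Fix_rcosets.
Qed.

Lemma rX_div_indexB :
  (rX G H)%:R / #|G : H|%g%:R - #|H|%:R^-1 =
    #|G|%:R^-1 * \sum_(h in H^#%g) (fixX G H h)%:R :> algC.
Proof.
have idx_neq0 : #|G : H|%g%:R != 0 :> algC by rewrite pnatr_eq0 -lt0n indexg_gt0.
have /(congr1 (GRing.natmul (1 : algC))) := rX_mul_order.
rewrite natrM natrD natr_sum addrC => /esym/(canRL (addrK _)) ->.
rewrite -(Lagrange sHG) natrM.
by field; rewrite idx_neq0 neq0CG.
Qed.

End PermutationCharacter.

Theorem corollary2 (gT : finGroupType) (G H : {group gT})
  (sHG : (H \subset G)%g) (ntH : H != 1%G) :
  (#|G|%:R)^-1 * \sum_(h in (H^#)%g) (fixX G H h)%:R < D_H G H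
  /\ (rX G H)%:R / (#|G : H|%g%:R) - (#|H|%:R)^-1 < D_H G H :> algC.
Proof.
have fix_lt_D : (#|G|%:R)^-1 * \sum_(h in (H^#)%g) (fixX G H h)%:R < D_H G H.
  rewrite /D_H sum_fixX_setD1 // ltr_pM2l ?invr_gt0 ?gt0CG //.
  under eq_bigr do rewrite sum_irr_setD1 //.
  under [ltRHS]eq_bigr do rewrite sum_irr_setD1 //.
  apply: (@sum_mul_lt_sum_mul_norm _ _ 0 _ (fun i => 'chi_i 1%g)
           (fun i => '['Res[H] 'chi_i, 1]_H)); rewrite ?cardG_gt1 //.
  - by move=> i; rewrite natr_ge0 ?cfdot_Res1_nat.
  - exact: cfdot_Res1_le_irr1.
  - by rewrite irr0 cfRes_cfun1 cfnorm1.
  - by rewrite irr0 cfun1E group1.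
  - under eq_bigr do rewrite -sum_irr_setD1 //.
    by apply: sum_irr1_mul_sum_irr; rewrite setD11.
by split=> //; rewrite rX_div_indexB.
Qed.
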